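(* Let $R$ be an $L$-layered domain$^\dagger$ (in particular $R$ is $\nu$-bipotent) whose tangible layer $R_1$ is a finite set. Then either $1\in L$ is infinite (i.e. $1+1=1$ in $L$), or the $\nu$-relation is trivial on $R_1$, in the sense that $a\cong_\nu \mathbb{1}_R$ for all $a\in R_1$.
   Context: A semiring$^\dagger$ is a structure $(L,+,\cdot,1)$ with $(L,\cdot,1)$ a monoid, $(L,+)$ an abelian semigroup, and two-sided distributivity (no zero element required). Let $L$ be a semiring$^\dagger$ with a designated sub-semiring$^\dagger$ $L_+$ of positive elements ($1\in L_+$); write $k\ge \ell$ iff $k=\ell$ or $k=\ell+p$ for some $p\in L_+$, assumed to be a partial order. An element $\ell\in L$ is finite if $\ell+m\neq\ell$ for all $m\in L_+$, and infinite otherwise. An $L$-quasi-layered domain$^\dagger$ is a commutative semiring$^\dagger$ $R$ with a decomposition into disjoint subsets $R=\bigsqcup_{\ell\in L}R_\ell$ and sort transition maps $\nu_{m,\ell}:R_\ell\to R_m$ for $m\ge\ell$, with $\nu_{\ell,\ell}=\mathrm{id}$, $\nu_{m,\ell}\circ\nu_{\ell,k}=\nu_{m,k}$, satisfying: (A1) $\mathbb{1}_R\in R_1$; (A2) $R_kR_\ell\subseteq R_{k\ell}$; (A3) $\nu_{m,k}(a)\nu_{m',\ell}(b)=\nu_{mm',k\ell}(ab)$ for $a\in R_k,b\in R_\ell$, $m\ge k,m'\ge\ell$; (A4) $\nu_{\ell,k}(a)+\nu_{\ell',k}(a)=\nu_{\ell+\ell',k}(a)$; (B) if $a\in R_k$,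 $b\in R_\ell$, $a\cong_\nu b$ then $a+b\in R_{k+\ell}$, $a+b\cong_\nu a$, and $a+b=a$ if $k$ is infinite. Here $a\cong_\nu b$ ($a\in R_k,b\in R_\ell$) means $\nu_{m,k}(a)=\nu_{m,\ell}(b)$ for some $m\ge k,\ell$; $a\le_\nu b$ means $a+b\cong_\nu b$; $a<_\nu b$ means $a\le_\nu b$ and $a\not\cong_\nu b$. $R$ is an $L$-layered domain$^\dagger$ if it is $\nu$-bipotent: for $a\not\cong_\nu b$ either $a<_\nu b$ or $b<_\nu a$, and $a<_\nu b$ implies $a+b=b$. Elements of $R_1$ are called tangible. *)

From Stdlib Require Import List.

Set Implicit Arguments.

Record is_semiring_dagger (L : Type) (add mul : L -> L -> L) (one : L) : Prop := {
  sd_addA : forall x y z, add x (add y z) = add (add x y) z;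
  sd_addC : forall x y, add x y = add y x;
  sd_mulA : forall x y z, mul x (mul y z) = mul (mul x y) z;
  sd_mul1l : forall x, mul one x = x;
  sd_mul1r : forall x, mul x one = x;
  sd_mulDl : forall x y z, mul (add x y) z = add (mul x z) (mul y z);
  sd_mulDr : forall x y z, mul x (add y z) = add (mul x y) (mul x z)
}.

Record is_com_semiring_dagger (R : Type) (add mul : R -> R -> R) (one : R) : Prop := {
  csd_semiring : is_semiring_dagger add mul one;
  csd_mulC : forall x y, mul x y = mul y x
}.

Section Layered.
Variables (L : Type) (addL mulL : L -> L -> L) (oneL : L) (Lpos : L -> Prop).

Definition is_positive_subsemiring : Prop :=
  Lpos oneL /\ (forall p q, Lpos p -> Lpos q -> Lpos (addL p q))
            /\ (forall p q, Lpos p -> Lpos q -> Lpos (mulL p q)).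

Definition geL (k l : L) : Prop := k = l \/ exists p, Lpos p /\ k = addL l p.

(** geL is assumed to be a partial order (reflexivity is automatic). *)
Definition geL_partial_order : Prop :=
  (forall k l, geL k l -> geL l k -> k = l) /\
  (forall k l m, geL k l -> geL l m -> geL k m).

Definition finiteL (l : L) : Prop := forall m, Lpos m -> addL l m <> l.
Definition infiniteL (l : L) : Prop := ~ finiteL l.

Variables (R : Type) (addR mulR : R -> R -> R) (oneR : R).
(** the decomposition R = disjoint union of the R_l is given by the sort
    function [lay] (a belongs to R_(lay a)); the sort transition map
    nu_{m,l} : R_l -> R_m (m >= l) is [nu m l], only its values on R_l matter. *)
Variables (lay : R -> L) (nu : L -> L -> R -> R).

Definition nu_cong (a b : R) : Prop :=
  exists m, geL m (lay a) /\ geL m (lay b) /\ nu m (lay a) a = nu m (lay b) b.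

Definition nu_le (a b : R) : Prop := nu_cong (addR a b) b.
Definition nu_lt (a b : R) : Prop := nu_le a b /\ ~ nu_cong a b.

Record is_quasi_layered_domain : Prop := {
  qld_semiring : is_com_semiring_dagger addR mulR oneR;
  qld_nu_sort : forall m a, geL m (lay a) -> lay (nu m (lay a) a) = m;
  qld_nu_id : forall a, nu (lay a) (lay a) a = a;
  qld_nu_comp : forall m l a, geL m l -> geL l (lay a) ->
      nu m l (nu l (lay a) a) = nu m (lay a) a;
  qld_A1 : lay oneR = oneL;
  qld_A2 : forall a b, lay (mulR a b) = mulL (lay a) (lay b);
  qld_A3 : forall a b m m', geL m (lay a) -> geL m' (lay b) ->
      mulR (nu m (lay a) a) (nu m' (lay b) b)
      = nu (mulL m m') (mulL (lay a) (lay b)) (mulR a b);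
  qld_A4 : forall a l l', geL l (lay a) -> geL l' (lay a) ->
      addR (nu l (lay a) a) (nu l' (lay a) a) = nu (addL l l') (lay a) a;
  qld_B : forall a b, nu_cong a b ->
      lay (addR a b) = addL (lay a) (lay b) /\ nu_cong (addR a b) a /\
      (infiniteL (lay a) -> addR a b = a)
}.

Definition nu_bipotent : Prop :=
  (forall a b, ~ nu_cong a b -> nu_lt a b \/ nu_lt b a) /\
  (forall a b, nu_lt a b -> addR a b = b).

Definition is_layered_domain : Prop := is_quasi_layered_domain /\ nu_bipotent.

Definition tangible_finite : Prop :=
  exists s : list R, forall a, lay a = oneL -> In a s.

End Layered.

From Stdlib Require Import List Classical Arith Lia FinFun.

(* Suppose [1 + 1 <> 1] in L and some tangible [a] is not ν-equivalent to [1].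
   By ν-bipotence [a + 1 = 1] or [1 + a = a], and these absorptions propagate to
   all positive powers of [a]. The powers are tangible, so finiteness of [R_1]
   forces a cycle [a^(i+k+1) = a^i], and absorption then makes [c = a^i]
   additively idempotent. But [c ≅ν c], so axiom (B) puts [c + c] in layer
   [1 + 1], whereas [c] lies in layer [1]. *)

Set Implicit Arguments.

Lemma finite_range_not_injective (T : Type) (f : nat -> T) (s : list T) :
  (forall n, In (f n) s) -> exists i j, i < j /\ f i = f j.
Proof.
  intros Hs. apply NNPP. intros Hnot.
  assert (Hinj : Injective f).
  { intros x y Exy. destruct (Nat.lt_trichotomy x y) as [Hl|[He|Hl]]; auto;
      exfalso; apply Hnot; eauto. }
  assert (ND : NoDup (map f (seq 0 (S (length s))))).
  { apply Injective_map_NoDup; [exact Hinj | apply seq_NoDup]. }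
  assert (Hincl : incl (map f (seq 0 (S (length s)))) s).
  { intros x Hx. apply in_map_iff in Hx. destruct Hx as [n [<- _]]. apply Hs. }
  pose proof (NoDup_incl_length ND Hincl) as Hle.
  rewrite length_map, length_seq in Hle. lia.
Qed.

Section SemiringPowers.
Variables (R : Type) (add mul : R -> R -> R) (one : R).
Hypothesis HR : is_semiring_dagger add mul one.

Fixpoint pow (a : R) (n : nat) : R :=
  match n with 0 => one | S n => mul a (pow a n) end.

Lemma powD (a : R) (m n : nat) : pow a (m + n) = mul (pow a m) (pow a n).
Proof.
  destruct HR as [_ _ mulA mul1l _ _ _].
  induction m as [|m IH]; simpl.
  - now rewrite mul1l.
  - now rewrite IH, mulA.
Qed.

Lemma pow_addr1_absorb (a : R) (n : nat) :
  add a one = one -> add (pow a (S n)) one = one.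
Proof.
  destruct HR as [addA _ _ _ mul1r _ mulDr].
  intros Ha. induction n as [|n IH]; simpl in *.
  - now rewrite mul1r.
  - assert (Ea : add (mul a (mul a (pow a n))) a = a).
    { transitivity (mul a (add (mul a (pow a n)) one)).
      - now rewrite mulDr, mul1r.
      - now rewrite IH, mul1r. }
    transitivity (add (mul a (mul a (pow a n))) (add a one)).
    + now rewrite Ha.
    + now rewrite addA, Ea.
Qed.

Lemma pow_add1l_absorb (a : R) (n : nat) :
  add one a = a -> add one (pow a (S n)) = pow a (S n).
Proof.
  destruct HR as [addA _ _ _ mul1r _ mulDr].
  intros Ha. induction n as [|n IH]; simpl in *.
  - now rewrite mul1r.
  - assert (Ep : add a (mul a (mul a (pow a n))) = mul a (mul a (pow a n))).
    { transitivity (mul a (add one (mul a (pow a n)))).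
      - now rewrite mulDr, mul1r.
      - now rewrite IH. }
    now rewrite <- Ep at 1; rewrite addA, Ha.
Qed.

Lemma addrr_fixed_by_absorbing (b c : R) :
  add b one = one \/ add one b = b -> mul b c = c -> add c c = c.
Proof.
  destruct HR as [_ _ _ mul1l _ mulDl _].
  intros [Hb|Hb] Hc.
  - rewrite <- Hc at 1. rewrite <- (mul1l c) at 2. now rewrite <- mulDl, Hb, mul1l.
  - rewrite <- Hc at 2. rewrite <- (mul1l c) at 1. now rewrite <- mulDl, Hb.
Qed.

Lemma pow_cycle_addrr (a : R) (k i : nat) :
  add a one = one \/ add one a = a -> pow a (S k + i) = pow a i ->
  add (pow a i) (pow a i) = pow a i.
Proof.
  intros Ha Hcyc. apply (@addrr_fixed_by_absorbing (pow a (S k))).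
  - destruct Ha as [Ha|Ha]; [left; now apply pow_addr1_absorb
                              | right; now apply pow_add1l_absorb].
  - now rewrite <- powD.
Qed.

End SemiringPowers.

Section LayeredDomain.
Variables (L : Type) (addL mulL : L -> L -> L) (oneL : L) (Lpos : L -> Prop).
Variables (R : Type) (addR mulR : R -> R -> R) (oneR : R).
Variables (lay : R -> L) (nu : L -> L -> R -> R).
Hypothesis HL : is_semiring_dagger addL mulL oneL.
Hypothesis HQ : is_quasi_layered_domain addL mulL oneL Lpos addR mulR oneR lay nu.

Lemma nu_cong_refl (a : R) : nu_cong addL Lpos lay nu a a.
Proof. exists (lay a). repeat split; now left. Qed.

Lemma lay_addrr_fixed (c : R) :
  addR c c = c -> addL (lay c) (lay c) = lay c.
Proof.
  intros Hc. destruct (qld_B HQ (nu_cong_refl c)) as [Hl _].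
  now rewrite Hc in Hl.
Qed.

Lemma lay_pow (a : R) :
  lay a = oneL -> forall n, lay (pow mulR oneR a n) = oneL.
Proof.
  intros Ha n. induction n as [|n IH]; simpl.
  - exact (qld_A1 HQ).
  - now rewrite (qld_A2 HQ), Ha, IH, (sd_mul1l HL).
Qed.

Lemma not_nu_cong1_absorb (a : R) :
  nu_bipotent addL Lpos addR lay nu -> ~ nu_cong addL Lpos lay nu a oneR ->
  addR a oneR = oneR \/ addR oneR a = a.
Proof.
  intros [Hcmp Hmax] Hnc.
  destruct (Hcmp a oneR Hnc) as [Hlt|Hlt]; [left|right]; now apply Hmax.
Qed.

End LayeredDomain.

Theorem corollary3p15
  (L : Type) (addL mulL : L -> L -> L) (oneL : L) (Lpos : L -> Prop)
  (HL : is_semiring_dagger addL mulL oneL)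
  (HLpos : is_positive_subsemiring addL mulL oneL Lpos)
  (Hpo : geL_partial_order addL Lpos)
  (R : Type) (addR mulR : R -> R -> R) (oneR : R)
  (lay : R -> L) (nu : L -> L -> R -> R)
  (HR : is_layered_domain addL mulL oneL Lpos addR mulR oneR lay nu)
  (Hfin : tangible_finite oneL lay) :
  (infiniteL addL Lpos oneL /\ addL oneL oneL = oneL) \/
  (forall a, lay a = oneL -> nu_cong addL Lpos lay nu a oneR).
Proof.
  destruct HR as [HQ Hbip].
  destruct (classic (addL oneL oneL = oneL)) as [H11|H11].
  { left. split; [intros Hfin1; exact (Hfin1 oneL (proj1 HLpos) H11) | exact H11]. }
  right. intros a Ha. apply NNPP. intros Hnc. apply H11.
  pose proof (csd_semiring (qld_semiring HQ)) as HRs.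
  pose proof (lay_pow HL HQ a Ha) as Htang.
  destruct Hfin as [s Hs].
  destruct (@finite_range_not_injective _ (pow mulR oneR a) s (fun n => Hs _ (Htang n)))
    as [i [j [Hij Hcyc]]].
  assert (Hidem : addR (pow mulR oneR a i) (pow mulR oneR a i) = pow mulR oneR a i).
  { apply (pow_cycle_addrr HRs (j - S i)).
    - exact (not_nu_cong1_absorb Hbip Hnc).
    - now replace (S (j - S i) + i) with j by lia. }
  pose proof (lay_addrr_fixed HQ Hidem) as Hlay.
  now rewrite Htang in Hlay.
Qed.
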